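(* Let $T$ be any spanning tree of $G$ and let $\tau=\sum_{(i,j)\in T}\frac{r(i,j)}{R(C(i,j))}$ (which equals the total stretch $\mathrm{st}_T(G,\mathbf r)$ of $T$). Let $\epsilon>0$. After $K=\tau\ln(\frac{\tau}{\epsilon})$ iterations, the algorithm Dual KOSZ (run with the tree $T$) returns $\mathbf{x}^K\in\mathbb{R}^V$ and $\mathbf{f}^K\in\mathbb{R}^{\vec E}$ such that $$\mathbb{E}\|\mathbf{x}^*-\mathbf{x}^K\|_{\mathbf L}^2\le \frac{\epsilon}{\tau}\|\mathbf{x}^*\|_{\mathbf L}^2\quad\text{and}\quad \mathbb{E}[\mathcal{E}(\mathbf f^K)]\le(1+\epsilon)\mathcal{E}(\mathbf f^* ),$$ where $\mathbf f^*$ is the minimum-energy $\mathbf b$-flow and $\mathbf x^*$ is any maximizer of $\mathcal B$.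
   Context: $G=(V,E)$ is a connected undirected graph with $n$ vertices and $m$ edges, resistances $r(e)>0$, and $\vec E$ an arbitrary fixed orientation of $E$; for $(i,j)\in\vec E$ set $f(j,i)=-f(i,j)$. A supply vector $\mathbf b\in\mathbb R^V$ satisfies $\sum_i b(i)=0$. A $\mathbf b$-flow is $\mathbf f\in\mathbb R^{\vec E}$ with $\sum_{j:(i,j)\in\vec E}f(i,j)-\sum_{j:(j,i)\in\vec E}f(j,i)=b(i)$ for all $i$. Energy: $\mathcal E(\mathbf f)=\frac12\sum_{e}r(e)f(e)^2$; $\mathbf f^*$ minimizes $\mathcal E$ over $\mathbf b$-flows. $\mathbf L=\sum_{ij\in E}\frac1{r(i,j)}(\mathbf e_i-\mathbf e_j)(\mathbf e_i-\mathbf e_j)^\top$, $\|\mathbf y\|_{\mathbf L}^2=\mathbf y^\top\mathbf L\mathbf y$, $\mathcal B(\mathbf x)=\mathbf b^\top\mathbf x-\frac12\mathbf x^\top\mathbf L\mathbf x$, and $\mathbf x^*$ maximizes $\mathcal B$ (equivalently $\mathbf L\mathbf x^*=\mathbf b$). Stretch: $\mathrm{st}_T(G,\mathbf r)=\sum_{(i,j)\in\vec E}\frac1{r(i,j)}\sum_{(k,l)\in P(i,j)}r(k,l)$, $P(i,j)$ the tree path. Root $T$ arbitrarily and direct tree edges toward the root; for a tree edge $(i,j)$, $C(i,j)$ is the vertex set of the component of $T-ij$ containing $i$. For $C\subset V$: $\delta(C)$ is the set of edges with exactly one endpoint in $C$, $R(C)=(\sum_{e\in\delta(C)}1/r(e))^{-1}$,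 $b(C)=\sum_{v\in C}b(v)$, and for potentials $\mathbf x$, $f_{\mathbf x}(C)=\sum_{ij\in E,\,i\in C,\,j\notin C}\frac{x(i)-x(j)}{r(i,j)}$. The tree-defined flow $\mathbf f_{T,\mathbf x}$ has $f_{T,\mathbf x}(i,j)=\frac{x(i)-x(j)}{r(i,j)}$ on non-tree edges, and on tree edges the unique values making it a $\mathbf b$-flow. Dual KOSZ: set $\mathbf x^0=0$; in each iteration $t$, sample a tree edge $(i,j)$ with probability $P_{ij}=\frac1\tau\cdot\frac{r(i,j)}{R(C(i,j))}$ independently, let $C=C(i,j)$, $\Delta^t=(b(C)-f_{\mathbf x^t}(C))R(C)$, and set $x^{t+1}(v)=x^t(v)+\Delta^t$ for $v\in C$, $x^{t+1}(v)=x^t(v)$ otherwise. After $K$ iterations output $\mathbf x^K$ and $\mathbf f^K=\mathbf f_{T,\mathbf x^K}$. *)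

From HB Require Import structures.
From mathcomp Require Import all_boot all_order all_algebra.
From mathcomp Require Import reals exp.
Set Implicit Arguments. Unset Strict Implicit. Unset Printing Implicit Defensive.
Import Order.TTheory GRing.Theory Num.Theory.
Local Open Scope ring_scope.

Section Graph.
Variables (R : realType) (n m : nat).
(* Graph G: vertices 'I_n, edges 'I_m; edge e is oriented (src e, dst e) in \vec E. *)
Variables (src dst : 'I_m -> 'I_n) (r : 'I_m -> R) (b : 'I_n -> R).

Definition adj (S : {set 'I_m}) : rel 'I_n := fun u v =>
  [exists e in S, ((src e == u) && (dst e == v)) || ((src e == v) && (dst e == u))].

Definition graph_connected : Prop := forall u v, connect (adj setT) u v.

(* T is a spanning tree: connected on all vertices and every edge is a bridge
   (removing it disconnects its endpoints), i.e. acyclic. *)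
Definition spanning_tree (T : {set 'I_m}) : Prop :=
  (forall u v, connect (adj T) u v) /\
  (forall e, e \in T -> ~~ connect (adj (T :\ e)) (src e) (dst e)).

(* C(e) for a tree edge e, with T rooted at root and tree edges directed to the
   root: the component of T - e not containing the root (it contains the child). *)
Definition Ccomp (T : {set 'I_m}) (root : 'I_n) (e : 'I_m) : {set 'I_n} :=
  [set v | ~~ connect (adj (T :\ e)) v root].

Definition crosses (C : {set 'I_n}) (e : 'I_m) : bool :=
  (src e \in C) != (dst e \in C).

Definition Rres (C : {set 'I_n}) : R := (\sum_(e < m | crosses C e) (r e)^-1)^-1.

Definition bset (C : {set 'I_n}) : R := \sum_(v in C) b v.

Definition fx (x : 'I_n -> R) (C : {set 'I_n}) : R :=
  \sum_(e < m)
    (if (src e \in C) && (dst e \notin C) then (x (src e) - x (dst e)) / r e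
     else if (dst e \in C) && (src e \notin C) then (x (dst e) - x (src e)) / r e
     else 0).

Definition is_bflow (f : 'I_m -> R) : Prop :=
  forall i, \sum_(e < m | src e == i) f e - \sum_(e < m | dst e == i) f e = b i.

Definition energy (f : 'I_m -> R) : R := 2^-1 * \sum_(e < m) r e * f e ^+ 2.

Definition chi (i : 'I_n) : 'cV[R]_n := delta_mx i 0.
Definition Lap : 'M[R]_n :=
  \sum_(e < m) (r e)^-1 *: ((chi (src e) - chi (dst e)) *m (chi (src e) - chi (dst e))^T).
Definition cvec (x : 'I_n -> R) : 'cV[R]_n := \col_i x i.
Definition quadL (x : 'I_n -> R) : R := ((cvec x)^T *m Lap *m cvec x) 0 0.
Definition Lnorm2 (y : 'I_n -> R) : R := quadL y.
Definition Bfun (x : 'I_n -> R) : R := \sum_i b i * x i - 2^-1 * quadL x.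

Definition tau (T : {set 'I_m}) (root : 'I_n) : R :=
  \sum_(e in T) r e / Rres (Ccomp T root e).

(* sampling probability of edge e (zero for non-tree edges) *)
Definition Pe (T : {set 'I_m}) (root : 'I_n) (e : 'I_m) : R :=
  if e \in T then (tau T root)^-1 * (r e / Rres (Ccomp T root e)) else 0.

Definition kosz_step (T : {set 'I_m}) (root : 'I_n) (x : 'I_n -> R) (e : 'I_m)
  : 'I_n -> R :=
  let C := Ccomp T root e in
  let Delta := (bset C - fx x C) * Rres C in
  fun v => if v \in C then x v + Delta else x v.

Definition kosz_x (T : {set 'I_m}) (root : 'I_n) (K : nat) (s : {ffun 'I_K -> 'I_m})
  : 'I_n -> R :=
  foldl (kosz_step T root) (fun _ => 0) [seq s k | k <- enum 'I_K].

(* probability of the sample sequence s (independent samples) *)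
Definition seq_prob (T : {set 'I_m}) (root : 'I_n) (K : nat) (s : {ffun 'I_K -> 'I_m}) : R :=
  \prod_(k < K) Pe T root (s k).

Definition Exp (T : {set 'I_m}) (root : 'I_n) (K : nat) (g : {ffun 'I_K -> 'I_m} -> R) : R :=
  \sum_(s : {ffun 'I_K -> 'I_m}) seq_prob T root s * g s.

(* f is the tree-defined flow f_{T,x}: potential flow on non-tree edges, and on
   tree edges the (unique) values making it a b-flow *)
Definition tree_defined_flow (T : {set 'I_m}) (x : 'I_n -> R) (f : 'I_m -> R) : Prop :=
  is_bflow f /\ (forall e, e \notin T -> f e = (x (src e) - x (dst e)) / r e).

End Graph.

(* Dual KOSZ is randomized coordinate ascent on the concave dual
   B(x) = b^T x - x^T L x / 2, with one direction 1_{C(e)} per tree edge e; the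
   update on C(e) is an exact line search and gains R(C(e)) (b(C(e)) - f_x(C(e)))^2 / 2.
   Sampling e with probability r(e) / (tau R(C(e))) makes the expected gain
   gap(x) / tau, where gap(x) = sum_{e in T} r(e) (b(C(e)) - f_x(C(e)))^2 / 2 is
   also the duality gap E(f_{T,x}) - B(x) of the tree-defined flow.  Expanding a
   potential along the tree edges and applying AM-GM edgewise gives
   B(xstar) - B(x) <= gap(x) <= tau (B(xstar) - B(x)), so the expected suboptimality
   contracts by 1 - 1/tau per iteration, and (1 - 1/tau)^K <= exp(-K/tau) <= eps/tau.
   Both bounds then follow from ||xstar - x||_L^2 = 2 (B(xstar) - B(x)),
   E(f_{T,x}) = B(x) + gap(x) <= B(xstar) + tau (B(xstar) - B(x)) and B(xstar) <= E(fstar). *)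

From Pilot Require Import Defs.
From HB Require Import structures.
From mathcomp Require Import all_boot all_order all_algebra.
From mathcomp Require Import reals sequences exp.
From mathcomp Require Import ring lra.
Import Order.TTheory GRing.Theory Num.Theory.
Local Open Scope ring_scope.

Set Implicit Arguments.
Unset Strict Implicit.
Unset Printing Implicit Defensive.

Section IidSampling.
Variables (R : numDomainType) (I : finType) (P : I -> R).

Definition ffun_snoc K (s : {ffun 'I_K -> I}) (i : I) : {ffun 'I_K.+1 -> I} :=
  [ffun k => if unlift ord_max k is Some j then s j else i].

Lemma widen_ord_lift_max K (j : 'I_K) : widen_ord (leqnSn K) j = lift ord_max j.
Proof. by apply: ord_inj; rewrite lift_max. Qed.

Lemma ffun_snoc_widen K s i (j : 'I_K) : ffun_snoc s i (widen_ord (leqnSn K) j) = s j.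
Proof. by rewrite ffunE widen_ord_lift_max liftK. Qed.

Lemma ffun_snoc_max K (s : {ffun 'I_K -> I}) i : ffun_snoc s i ord_max = i.
Proof. by rewrite ffunE unlift_none. Qed.

Lemma big_ffunS K (F : {ffun 'I_K.+1 -> I} -> R) :
  \sum_(t : {ffun 'I_K.+1 -> I}) F t =
  \sum_(s : {ffun 'I_K -> I}) \sum_i F (ffun_snoc s i).
Proof.
pose split_last (t : {ffun 'I_K.+1 -> I}) :=
  ([ffun j => t (widen_ord (leqnSn K) j)], t ord_max).
have snoc_bij : bijective (fun p : {ffun 'I_K -> I} * I => ffun_snoc p.1 p.2).
  exists split_last => [[s i]|t]; rewrite /split_last /=.
    by rewrite ffun_snoc_max; congr (_, _); apply/ffunP => j; rewrite ffunE ffun_snoc_widen.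
  apply/ffunP => k; rewrite ffunE; case: unliftP => [j ->|->] //=.
  by rewrite ffunE widen_ord_lift_max.
by rewrite (reindex _ (onW_bij _ snoc_bij)) pair_big.
Qed.

Lemma prod_ffun_snoc K (s : {ffun 'I_K -> I}) i :
  \prod_(k < K.+1) P (ffun_snoc s i k) = (\prod_(k < K) P (s k)) * P i.
Proof.
rewrite big_ord_recr /= ffun_snoc_max; congr (_ * _).
by apply: eq_bigr => j _; rewrite ffun_snoc_widen.
Qed.

Lemma map_ffun_snoc K (s : {ffun 'I_K -> I}) i :
  [seq ffun_snoc s i k | k <- enum 'I_K.+1] = rcons [seq s k | k <- enum 'I_K] i.
Proof.
rewrite enum_ordSr map_rcons -map_comp ffun_snoc_max; congr rcons.
by apply: eq_map => j /=; rewrite ffun_snoc_widen.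
Qed.

Lemma sum_prod_ffun K :
  \sum_(s : {ffun 'I_K -> I}) \prod_(k < K) P (s k) = (\sum_i P i) ^+ K.
Proof. by rewrite -(bigA_distr_bigA (fun (_ : 'I_K) i => P i)) prodr_const card_ord. Qed.

Hypothesis P_ge0 : forall i, 0 <= P i.

Lemma iterate_contraction (X : Type) (step : X -> I -> X) (phi : X -> R) (a : R) :
  0 <= a -> (forall x, \sum_i P i * phi (step x i) <= a * phi x) ->
  forall K x0, \sum_(s : {ffun 'I_K -> I})
      (\prod_(k < K) P (s k)) * phi (foldl step x0 [seq s k | k <- enum 'I_K])
    <= a ^+ K * phi x0.
Proof.
move=> a_ge0 contract; elim=> [|K IH] x0.
  under eq_bigr do rewrite big_ord0 mul1r enum_ord0 /=.
  by rewrite sumr_const card_ffun !card_ord expn0 expr0 mul1r.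
rewrite big_ffunS exprSr -mulrA [a * _]mulrC mulrA.
apply: le_trans (ler_wpM2r a_ge0 (IH x0)); rewrite mulr_suml.
apply: ler_sum => s _; rewrite -mulrA.
under eq_bigr do rewrite prod_ffun_snoc map_ffun_snoc foldl_rcons -mulrA.
rewrite -mulr_sumr; apply: ler_wpM2l; first exact: prodr_ge0.
by rewrite mulrC; apply: contract.
Qed.

End IidSampling.

Lemma one_sub_inv_expn_le (R : realType) (t eps : R) (K : nat) :
  1 <= t -> 0 < eps -> t * ln (t / eps) <= K%:R -> (1 - t^-1) ^+ K <= eps / t.
Proof.
move=> t_ge1 eps_gt0 K_ge; have t_gt0 : 0 < t by apply: lt_le_trans t_ge1.
have step_le : 1 - t^-1 <= expR (- t^-1) by have := expR_ge1Dx (- t^-1); lra.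
apply: le_trans (lerXn2r _ _ _ step_le) _.
- by rewrite nnegrE subr_ge0 invf_le1.
- by rewrite nnegrE expR_ge0.
rewrite -expRM_natr -[eps / t]lnK ?posrE ?divr_gt0 // ler_expR.
rewrite -invf_div lnV ?posrE ?divr_gt0 // mulNr lerN2.
by rewrite [t^-1 * _]mulrC ler_pdivlMr // mulrC.
Qed.

Section Graph.
Variables (n m : nat) (src dst : 'I_m -> 'I_n).

Section SpanningTree.
Variables (T : {set 'I_m}) (root : 'I_n).

Local Notation adj := (adj src dst).
Local Notation C := (Ccomp src dst T root).
Implicit Type S : {set 'I_m}.

Lemma adjP S u v :
  reflect (exists2 e, e \in S & ((src e == u) && (dst e == v)) || ((src e == v) && (dst e == u)))
          (adj S u v).
Proof. exact: (iffP exists_inP). Qed.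

Lemma adj_edge S e : e \in S -> adj S (src e) (dst e).
Proof. by move=> eS; apply/adjP; exists e; rewrite ?eqxx. Qed.

Lemma adj_sym S : symmetric (adj S).
Proof. by move=> u v; apply/adjP/adjP => -[e eS uv]; exists e; rewrite // orbC. Qed.

Lemma connect_adj_sym S : connect_sym (adj S).
Proof. exact/sym_connect_sym/adj_sym. Qed.

Lemma connect_setD1_ends S e v : connect (adj S) (src e) v ->
  connect (adj (S :\ e)) v (src e) || connect (adj (S :\ e)) v (dst e).
Proof.
have closed_ends :
    closed (adj S) [pred w | connect (adj (S :\ e)) w (src e) || connect (adj (S :\ e)) w (dst e)].
  apply: intro_closed; first exact: connect_adj_sym.
  move=> u w /adjP [e' e'S uw] /orP u_reaches; have [e'e | e'_neq_e] := eqVneq e' e.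
    move: uw; rewrite e'e => /orP [/andP [_ /eqP <-] | /andP [/eqP <- _]];
    by rewrite !inE connect0 ?orbT.
  have wu : adj (S :\ e) w u by rewrite adj_sym; apply/adjP; exists e'; rewrite // !inE e'_neq_e.
  by case: u_reaches => reach; rewrite !inE (connect_trans (connect1 wu) reach) ?orbT.
move=> conn; move: (closed_connect closed_ends conn).
by rewrite !inE connect0 /= => <-.
Qed.

Lemma root_notin_Ccomp e : root \notin C e.
Proof. by rewrite inE negbK connect0. Qed.

Lemma Ccomp_uncut e e' : e' \in T -> e' != e -> ~~ crosses src dst (C e) e'.
Proof.
move=> e'T e'_neq_e; have e'_kept : e' \in T :\ e by rewrite !inE e'_neq_e.
by rewrite /crosses negbK !inE (same_connect1 (connect_adj_sym _) (adj_edge e'_kept)).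
Qed.

Hypothesis tree : spanning_tree src dst T.

Lemma Ccomp_cut e : e \in T -> crosses src dst (C e) e.
Proof.
move=> eT; have [tree_conn bridge] := tree.
have reach := connect_setD1_ends (tree_conn (src e) root).
have c_sym := connect_adj_sym (T :\ e).
have not_both :
    ~~ (connect (adj (T :\ e)) (src e) root && connect (adj (T :\ e)) (dst e) root).
  apply: contraNN (bridge e eT) => /andP [s_root d_root].
  by apply: connect_trans s_root _; rewrite c_sym.
move: reach not_both; rewrite /crosses !inE ![connect _ root _]c_sym.
by case: (connect _ (src e) root); case: (connect _ (dst e) root).
Qed.

Lemma tree_potential_const (A : eqType) (h : 'I_n -> A) :
  (forall e, e \in T -> h (src e) = h (dst e)) -> forall v, h v = h root.
Proof.
move=> h_edge v; have closed_level : closed (adj T) [pred u | h u == h root].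
  apply: intro_closed; first exact: connect_adj_sym.
  by move=> u w /adjP [e eT /orP [] /andP [/eqP <- /eqP <-]] /eqP <-; rewrite inE (h_edge e eT).
have := closed_connect closed_level (tree.1 root v).
by rewrite !inE eqxx => /esym /eqP.
Qed.

Lemma spanning_tree_neq0 e : src e != dst e -> T != set0.
Proof.
move=> loopfree; apply: contra_neq loopfree => T0.
have no_adj : closed (adj T) (pred1 (src e)) by move=> u w /adjP [e']; rewrite T0 inE.
have := closed_connect no_adj (tree.1 (src e) (dst e)).
by rewrite !inE eqxx => /esym /eqP ->.
Qed.

End SpanningTree.

Section Potentials.
Variables (R : realType) (r : 'I_m -> R) (b : 'I_n -> R).
Hypothesis r_gt0 : forall e, 0 < r e.

Local Notation B := (Bfun src dst r b).

Definition pdiff (x : 'I_n -> R) e := x (src e) - x (dst e).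

Definition lapform (x y : 'I_n -> R) := \sum_e pdiff x e * pdiff y e / r e.

Definition ind (C : {set 'I_n}) (v : 'I_n) : R := (v \in C)%:R.

Lemma r_neq0 e : r e != 0.
Proof. by rewrite gt_eqF. Qed.

Lemma quadL_lapform x : quadL src dst r x = lapform x x.
Proof.
rewrite /quadL /Lap mulmx_sumr mulmx_suml summxE; apply: eq_bigr => e _.
rewrite -scalemxAr -scalemxAl mxE.
set u := chi R (src e) - chi R (dst e).
have xu_pdiff i j : ((cvec x)^T *m u) i j = pdiff x e.
  by rewrite /u mulmxBr /chi -!colE !mxE.
rewrite mulmxA -[_ *m u^T *m _]mulmxA -[u^T *m _]trmxK trmx_mul trmxK.
by rewrite [X in _ * X = _]mxE big_ord1 [X in _ * (_ * X)]mxE !xu_pdiff mulrC.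
Qed.

Lemma lapform_ge0 x : 0 <= lapform x x.
Proof. by apply: sumr_ge0 => e _; rewrite divr_ge0 -?expr2 ?sqr_ge0 ?ltW. Qed.

Lemma lapformBl x y z : lapform x z - lapform y z = lapform (fun v => x v - y v) z.
Proof.
by rewrite /lapform -sumrB; apply: eq_bigr => e _; rewrite /pdiff; ring.
Qed.

Lemma lapform_shift x y t :
  lapform (fun v => x v + t * y v) (fun v => x v + t * y v) =
  lapform x x + 2 * t * lapform x y + t ^+ 2 * lapform y y.
Proof.
rewrite /lapform !mulr_sumr -!big_split; apply: eq_bigr => e _ /=.
by rewrite /pdiff; ring.
Qed.

Lemma Bfun_lapform x : B x = \sum_i b i * x i - 2^-1 * lapform x x.
Proof. by rewrite /Bfun quadL_lapform. Qed.

Lemma Bfun_shift x y t :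
  B (fun v => x v + t * y v) =
  B x + t * (\sum_i b i * y i - lapform x y) - t ^+ 2 / 2 * lapform y y.
Proof.
rewrite !Bfun_lapform lapform_shift.
have -> : \sum_i b i * (x i + t * y i) = \sum_i b i * x i + t * \sum_i b i * y i.
  by rewrite mulr_sumr -big_split; apply: eq_bigr => i _ /=; ring.
by field.
Qed.

Lemma Bfun0 : B (fun _ => 0) = 0.
Proof.
rewrite Bfun_lapform big1 => [|i _]; last by rewrite mulr0.
by rewrite /lapform big1 ?mulr0 ?subr0 // => e _; rewrite /pdiff subrr !mul0r.
Qed.

Section Maximizer.
Variable xs : 'I_n -> R.
Hypothesis xs_max : forall x, B x <= B xs.

Lemma Bfun_argmax_stationary y : \sum_i b i * y i = lapform xs y.
Proof.
apply/eqP; rewrite -subr_eq0; apply/eqP.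
set c := _ - _; set q := lapform y y; have q_ge0 : 0 <= q := lapform_ge0 y.
(* moving by [t y] gains [t c - t^2 q / 2] > 0 for [t = c / (q + 1)], unless [c = 0] *)
pose t := c / (q + 1); have c_def : c = t * (q + 1) by rewrite divfK // gt_eqF ?ltr_wpDl.
have := xs_max (fun v => xs v + t * y v); rewrite Bfun_shift -/c -/q c_def => gain_le0.
have : t ^+ 2 * (q / 2 + 1) <= 0 by nra.
rewrite pmulr_lle0 ?ltr_wpDl ?divr_ge0 // => t2_le0.
have /eqP -> : t == 0 by rewrite -sqrf_eq0 eq_le t2_le0 sqr_ge0.
by rewrite mul0r.
Qed.

Lemma Bfun_argmax_value : B xs = 2^-1 * lapform xs xs.
Proof. by rewrite Bfun_lapform Bfun_argmax_stationary; field. Qed.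

Lemma Bfun_argmax_sub x : B xs - B x = 2^-1 * lapform (fun v => xs v - x v) (fun v => xs v - x v).
Proof.
have -> : x = (fun v => xs v + (-1) * (xs v - x v)) by apply: boolp.funext => v; ring.
rewrite Bfun_shift Bfun_argmax_stationary subrr.
have -> : (fun v => xs v - (xs v + -1 * (xs v - x v))) = (fun v => xs v - x v).
  by apply: boolp.funext => v; ring.
by field.
Qed.

Lemma Bfun_argmax_ge0 : 0 <= B xs.
Proof. by rewrite -Bfun0 xs_max. Qed.

Lemma Lnorm2_argmax : Lnorm2 src dst r xs = 2 * B xs.
Proof. by rewrite /Lnorm2 quadL_lapform Bfun_argmax_value; field. Qed.

Lemma Lnorm2_argmax_sub x : Lnorm2 src dst r (fun v => xs v - x v) = 2 * (B xs - B x).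
Proof. by rewrite /Lnorm2 quadL_lapform Bfun_argmax_sub; field. Qed.

End Maximizer.

Lemma bflow_pairing f : is_bflow src dst b f ->
  forall x, \sum_i b i * x i = \sum_e f e * pdiff x e.
Proof.
move=> f_flow x.
have sum_end (g : 'I_m -> 'I_n) :
    \sum_i (\sum_(e < m | g e == i) f e) * x i = \sum_e f e * x (g e).
  under eq_bigr do rewrite mulr_suml.
  rewrite (exchange_big_dep xpredT) //=; apply: eq_bigr => e _.
  by rewrite (big_pred1 (g e)) // => v /=; rewrite eq_sym.
under eq_bigr do rewrite -f_flow mulrBl.
by rewrite sumrB !sum_end -sumrB; apply: eq_bigr => e _; rewrite /pdiff; ring.
Qed.

Lemma energy_sub_Bfun f x : is_bflow src dst b f ->
  energy r f - B x = 2^-1 * \sum_e r e * (f e - pdiff x e / r e) ^+ 2.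
Proof.
move=> f_flow; rewrite Bfun_lapform (bflow_pairing f_flow) /energy /lapform !mulr_sumr -!sumrB.
by apply: eq_bigr => e _; have r_e_neq0 := r_neq0 e; field.
Qed.

Lemma Bfun_le_energy f x : is_bflow src dst b f -> B x <= energy r f.
Proof.
move=> f_flow; rewrite -subr_ge0 (energy_sub_Bfun _ f_flow) mulr_ge0 ?invr_ge0 //.
by apply: sumr_ge0 => e _; rewrite mulr_ge0 ?sqr_ge0 ?ltW.
Qed.

Lemma bset_ind C : bset b C = \sum_i b i * ind C i.
Proof.
rewrite /bset big_mkcond; apply: eq_bigr => i _; rewrite /ind.
by case: (i \in C); rewrite ?mulr1 ?mulr0.
Qed.

Lemma fx_lapform x C : fx src dst r x C = lapform x (ind C).
Proof.
apply: eq_bigr => e _; rewrite /pdiff /ind.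
by case: (src e \in C); case: (dst e \in C) => /=; ring.
Qed.

Lemma pdiff_ind_uncut C e : ~~ crosses src dst C e -> pdiff (ind C) e = 0.
Proof. by rewrite /crosses /pdiff /ind negbK => /eqP ->; rewrite subrr. Qed.

Lemma sqr_pdiff_ind_cut C e : crosses src dst C e -> pdiff (ind C) e ^+ 2 = 1.
Proof.
rewrite /crosses /pdiff /ind.
by case: (src e \in C); case: (dst e \in C) => //= _; rewrite ?subr0 ?sub0r ?sqrrN expr1n.
Qed.

Lemma lapform_ind C : lapform (ind C) (ind C) = (Rres src dst r C)^-1.
Proof.
rewrite /Rres invrK big_mkcond; apply: eq_bigr => e _; rewrite -expr2.
case: ifP => [/sqr_pdiff_ind_cut -> | /negbT /pdiff_ind_uncut ->]; first by rewrite mul1r.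
by rewrite expr0n mul0r.
Qed.

Lemma Rres_inv_ge C e : crosses src dst C e -> (r e)^-1 <= (Rres src dst r C)^-1.
Proof.
move=> cut; rewrite /Rres invrK (bigD1 e) //= lerDl.
by apply: sumr_ge0 => i _; rewrite invr_ge0 ltW.
Qed.

Lemma Bfun_cut_step C x :
  let gain := (bset b C - fx src dst r x C) * Rres src dst r C in
  B (fun v => x v + gain * ind C v) - B x =
  2^-1 * Rres src dst r C * (bset b C - fx src dst r x C) ^+ 2.
Proof.
rewrite /= Bfun_shift -bset_ind -fx_lapform lapform_ind.
have [-> | Rres_neq0] := eqVneq (Rres src dst r C) 0; first by rewrite invr0; ring.
by field.
Qed.

Section DualKOSZ.
Variables (T : {set 'I_m}) (root : 'I_n).
Hypothesis tree : spanning_tree src dst T.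

Local Notation C := (Ccomp src dst T root).
Local Notation Rres := (Rres src dst r).
Local Notation tau := (tau src dst r T root).
Local Notation Pe := (Pe src dst r T root).
Local Notation Exp := (Exp src dst r T root).
Local Notation step := (kosz_step src dst r b T root).
Local Notation kosz_x := (kosz_x src dst r b T root).

Lemma Rres_Ccomp_gt0 e : e \in T -> 0 < Rres (C e).
Proof.
move=> eT; rewrite -invr_gt0; apply: (lt_le_trans _ (Rres_inv_ge (Ccomp_cut root tree eT))).
by rewrite invr_gt0.
Qed.

Lemma r_div_Rres_ge1 e : e \in T -> 1 <= r e / Rres (C e).
Proof.
move=> eT; rewrite -[leLHS](mulfV (r_neq0 e)) ler_pM2l //.
exact: Rres_inv_ge (Ccomp_cut root tree eT).
Qed.

Lemma tau_ge1 e : e \in T -> 1 <= tau.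
Proof.
move=> eT; rewrite /Defs.tau (bigD1 e) //=; apply: le_trans (r_div_Rres_ge1 eT) _.
rewrite lerDl; apply: sumr_ge0 => e' /andP [e'T _].
exact: le_trans (r_div_Rres_ge1 e'T).
Qed.

Lemma Pe_ge0 e : 0 <= Pe e.
Proof.
rewrite /Defs.Pe; case: ifP => // eT; have tau_ge0 : 0 <= tau := le_trans ler01 (tau_ge1 eT).
by rewrite mulr_ge0 ?invr_ge0 // (le_trans ler01 (r_div_Rres_ge1 eT)).
Qed.

Lemma sum_Pe : 0 < tau -> \sum_e Pe e = 1.
Proof. by move=> tau_gt0; rewrite /Defs.Pe -big_mkcond /= -mulr_sumr mulVf ?gt_eqF. Qed.

Lemma eq_Exp K (g h : {ffun 'I_K -> 'I_m} -> R) : (forall s, g s = h s) -> Exp g = Exp h.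
Proof. by move=> gh; apply: eq_bigr => s _; rewrite gh. Qed.

Lemma le_Exp K (g h : {ffun 'I_K -> 'I_m} -> R) : (forall s, g s <= h s) -> Exp g <= Exp h.
Proof.
move=> gh; apply: ler_sum => s _; apply: ler_wpM2l (gh s).
by apply: prodr_ge0 => k _; apply: Pe_ge0.
Qed.

Lemma ExpZ K c (g : {ffun 'I_K -> 'I_m} -> R) : Exp (fun s => c * g s) = c * Exp g.
Proof. by rewrite /Defs.Exp mulr_sumr; apply: eq_bigr => s _; rewrite mulrCA. Qed.

Lemma ExpD K (g h : {ffun 'I_K -> 'I_m} -> R) : Exp (fun s => g s + h s) = Exp g + Exp h.
Proof. by rewrite /Defs.Exp -big_split; apply: eq_bigr => s _; rewrite mulrDr. Qed.

Lemma Exp_cst K c : 0 < tau -> Exp (fun _ : {ffun 'I_K -> 'I_m} => c) = c.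
Proof. by move=> tau_gt0; rewrite /Defs.Exp -mulr_suml sum_prod_ffun sum_Pe // expr1n mul1r. Qed.

Definition cut_defect x e := bset b (C e) - fx src dst r x (C e).

Definition dual_gap x := 2^-1 * \sum_(e in T) r e * cut_defect x e ^+ 2.

Lemma kosz_stepE x e :
  step x e = (fun v => x v + (cut_defect x e * Rres (C e)) * ind (C e) v).
Proof.
apply: boolp.funext => v; rewrite /kosz_step /ind.
by case: (v \in C e); rewrite /= ?mulr1 ?mulr0 ?addr0.
Qed.

Lemma expected_gain x : 0 < tau -> \sum_e Pe e * (B (step x e) - B x) = tau^-1 * dual_gap x.
Proof.
move=> tau_gt0; rewrite /dual_gap /Defs.Pe [in RHS]big_mkcond /= !mulr_sumr; apply: eq_bigr => e _.
case: ifP => eT; last by rewrite !mul0r !mulr0.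
rewrite kosz_stepE /cut_defect Bfun_cut_step.
have r_e_neq0 := r_neq0 e.
by field; rewrite !gt_eqF ?Rres_Ccomp_gt0.
Qed.

Lemma cut_defect_bflow f x e : is_bflow src dst b f ->
  cut_defect x e = \sum_e' (f e' - pdiff x e' / r e') * pdiff (ind (C e)) e'.
Proof.
move=> f_flow; rewrite /cut_defect bset_ind (bflow_pairing f_flow) fx_lapform /lapform -sumrB.
by apply: eq_bigr => e' _; ring.
Qed.

Lemma tree_flow_energy x f : tree_defined_flow src dst r b T x f -> energy r f - B x = dual_gap x.
Proof.
move=> [f_flow f_off]; rewrite (energy_sub_Bfun _ f_flow) /dual_gap; congr (_ * _).
rewrite [RHS]big_mkcond; apply: eq_bigr => e _ /=; case: ifP => eT; last first.
  by rewrite f_off ?eT // subrr expr0n /= mulr0.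
rewrite (cut_defect_bflow _ _ f_flow) (bigD1 e) //= big1 ?addr0.
  by rewrite exprMn (sqr_pdiff_ind_cut (Ccomp_cut root tree eT)) mulr1.
move=> e' e'_neq_e; case: (boolP (e' \in T)) => e'T.
  by rewrite (pdiff_ind_uncut (Ccomp_uncut root e'T e'_neq_e)) mulr0.
by rewrite f_off // subrr mul0r.
Qed.

(* [pdiff (ind (C e)) e] is the sign, +1 or -1, with which the tree edge [e] leaves [C e]. *)
Lemma tree_decomposition z v :
  z v = z root + \sum_(e in T) pdiff (ind (C e)) e * pdiff z e * ind (C e) v.
Proof.
move: v; pose w v := z root + \sum_(e in T) pdiff (ind (C e)) e * pdiff z e * ind (C e) v.
have pdiff_w e' : e' \in T -> pdiff w e' = pdiff z e'.
  move=> e'T; have -> : pdiff w e' =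
      \sum_(e in T) pdiff (ind (C e)) e * pdiff z e * pdiff (ind (C e)) e'.
    rewrite /pdiff /w /= opprD addrACA subrr add0r -sumrB.
    by apply: eq_bigr => e _; rewrite /pdiff; ring.
  rewrite (bigD1 e') //= big1 ?addr0 => [|e /andP [_ e_neq_e']].
    by rewrite mulrAC -expr2 (sqr_pdiff_ind_cut (Ccomp_cut root tree e'T)) mul1r.
  have e'_neq_e : e' != e by rewrite eq_sym.
  by rewrite (pdiff_ind_uncut (Ccomp_uncut root e'T e'_neq_e)) mulr0.
have w_root : w root = z root.
  rewrite /w big1 ?addr0 // => e _.
  by rewrite /ind (negbTE (root_notin_Ccomp _ _ _)) mulr0.
have w_sub_z u : w u - z u = w root - z root.
  apply: (tree_potential_const root tree (h := fun u => w u - z u)) => e eT.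
  by have := pdiff_w e eT; rewrite /pdiff; lra.
by move=> v; change (z v = w v); have := w_sub_z v; lra.
Qed.

Lemma pdiff_tree_decomposition z e' :
  pdiff z e' = \sum_(e in T) pdiff (ind (C e)) e * pdiff z e * pdiff (ind (C e)) e'.
Proof.
rewrite [LHS]/pdiff (tree_decomposition z (src e')) (tree_decomposition z (dst e')).
by rewrite opprD addrACA subrr add0r -sumrB; apply: eq_bigr => e _; rewrite /pdiff; ring.
Qed.

Lemma lapform_le_cut_sum z : lapform z z <= \sum_(e in T) r e * lapform z (ind (C e)) ^+ 2.
Proof.
have lapform_tree :
    lapform z z = \sum_(e in T) pdiff (ind (C e)) e * pdiff z e * lapform z (ind (C e)).
  transitivity (\sum_e' pdiff z e' *
      (\sum_(e in T) pdiff (ind (C e)) e * pdiff z e * pdiff (ind (C e)) e') / r e').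
    by apply: eq_bigr => e' _; rewrite -pdiff_tree_decomposition.
  under eq_bigr do rewrite mulr_sumr mulr_suml.
  rewrite exchange_big /=; apply: eq_bigr => e _; rewrite /lapform mulr_sumr.
  by apply: eq_bigr => e' _; ring.
have tree_part : \sum_(e in T) pdiff z e * pdiff z e / r e <= lapform z z.
  rewrite [leRHS](bigID (fun e => e \in T)) /= lerDl.
  by apply: sumr_ge0 => e _; rewrite divr_ge0 -?expr2 ?sqr_ge0 ?ltW.
(* AM-GM on each tree edge, the cut sign squaring to 1 *)
have amgm : \sum_(e in T) pdiff (ind (C e)) e * pdiff z e * lapform z (ind (C e)) <=
    2^-1 * \sum_(e in T) pdiff z e * pdiff z e / r e +
    2^-1 * \sum_(e in T) r e * lapform z (ind (C e)) ^+ 2.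
  rewrite !mulr_sumr -big_split /=; apply: ler_sum => e eT.
  have sign_sqr := sqr_pdiff_ind_cut (Ccomp_cut root tree eT).
  set s := pdiff (ind (C e)) e in sign_sqr *; set d := pdiff z e; set F := lapform z (ind (C e)).
  have r_e_neq0 := r_neq0 e.
  have sq_ge0 : 0 <= r e * (s * d / r e - F) ^+ 2 by rewrite mulr_ge0 ?sqr_ge0 ?ltW.
  have expand : r e * (s * d / r e - F) ^+ 2 =
      s ^+ 2 * (d * d / r e) - 2 * (s * d * F) + r e * F ^+ 2 by field.
  by rewrite sign_sqr mul1r in expand; lra.
lra.
Qed.

Section Convergence.
Variable xs : 'I_n -> R.
Hypothesis xs_max : forall x, B x <= B xs.

Lemma cut_defect_lapform x e : cut_defect x e = lapform (fun v => xs v - x v) (ind (C e)).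
Proof. by rewrite /cut_defect bset_ind (Bfun_argmax_stationary xs_max) fx_lapform lapformBl. Qed.

Lemma Bfun_sub_le_dual_gap x : B xs - B x <= dual_gap x.
Proof.
rewrite (Bfun_argmax_sub xs_max) /dual_gap; apply: ler_wpM2l; first by rewrite invr_ge0.
by apply: le_trans (lapform_le_cut_sum _) _; apply: ler_sum => e _; rewrite cut_defect_lapform.
Qed.

Lemma dual_gap_le x : 0 < tau -> dual_gap x <= tau * (B xs - B x).
Proof.
move=> tau_gt0; have gain_le : tau^-1 * dual_gap x <= B xs - B x.
  rewrite -expected_gain // -[leRHS]mul1r -(sum_Pe tau_gt0) mulr_suml.
  by apply: ler_sum => e _; rewrite ler_wpM2l ?Pe_ge0 // lerD2r xs_max.
have inv_tau_gt0 : 0 < tau^-1 by rewrite invr_gt0.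
by rewrite -(ler_pM2l inv_tau_gt0) mulKf ?gt_eqF.
Qed.

Lemma expected_suboptimality_step x : 0 < tau ->
  \sum_e Pe e * (B xs - B (step x e)) <= (1 - tau^-1) * (B xs - B x).
Proof.
move=> tau_gt0.
have -> : \sum_e Pe e * (B xs - B (step x e)) = B xs - B x - tau^-1 * dual_gap x.
  rewrite -expected_gain // -[B xs - B x]mul1r -(sum_Pe tau_gt0) mulr_suml -sumrB.
  by apply: eq_bigr => e _; ring.
have inv_tau_ge0 : 0 <= tau^-1 by rewrite invr_ge0 ltW.
have := ler_wpM2l inv_tau_ge0 (Bfun_sub_le_dual_gap x); lra.
Qed.

Lemma Exp_suboptimality K : 1 <= tau ->
  Exp (fun s : {ffun 'I_K -> 'I_m} => B xs - B (kosz_x s)) <= (1 - tau^-1) ^+ K * B xs.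
Proof.
move=> one_le_tau; have tau_gt0 : 0 < tau := lt_le_trans ltr01 one_le_tau.
have contraction_ge0 : 0 <= 1 - tau^-1 by rewrite subr_ge0 invf_le1.
rewrite -[X in _ <= _ * X]subr0 -Bfun0.
apply: (iterate_contraction (step := step) (phi := fun x => B xs - B x) Pe_ge0 contraction_ge0).
by move=> x; apply: expected_suboptimality_step.
Qed.

Variables (eps : R) (K : nat).
Hypotheses (one_le_tau : 1 <= tau) (eps_gt0 : 0 < eps).
Hypothesis K_ge : tau * ln (tau / eps) <= K%:R.

Lemma Exp_suboptimality_le :
  Exp (fun s : {ffun 'I_K -> 'I_m} => B xs - B (kosz_x s)) <= eps / tau * B xs.
Proof.
apply: le_trans (Exp_suboptimality K one_le_tau) _.
by rewrite ler_wpM2r ?(Bfun_argmax_ge0 xs_max) ?(one_sub_inv_expn_le one_le_tau eps_gt0 K_ge).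
Qed.

Lemma Exp_potential_error_le :
  Exp (fun s : {ffun 'I_K -> 'I_m} => Lnorm2 src dst r (fun v => xs v - kosz_x s v))
    <= eps / tau * Lnorm2 src dst r xs.
Proof.
rewrite (eq_Exp (fun s => Lnorm2_argmax_sub xs_max (kosz_x s))) ExpZ.
by rewrite (Lnorm2_argmax xs_max) mulrCA ler_pM2l // Exp_suboptimality_le.
Qed.

Lemma Exp_tree_flow_energy_le (fs : 'I_m -> R) (fK : {ffun 'I_K -> 'I_m} -> 'I_m -> R) :
  is_bflow src dst b fs ->
  (forall s, tree_defined_flow src dst r b T (kosz_x s) (fK s)) ->
  Exp (fun s => energy r (fK s)) <= (1 + eps) * energy r fs.
Proof.
move=> fs_flow fK_tree; have tau_gt0 : 0 < tau := lt_le_trans ltr01 one_le_tau.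
have energy_le s : energy r (fK s) <= B xs + tau * (B xs - B (kosz_x s)).
  have := tree_flow_energy (fK_tree s); have := dual_gap_le (kosz_x s) tau_gt0.
  have := xs_max (kosz_x s); lra.
apply: le_trans (le_Exp energy_le) _; rewrite ExpD Exp_cst // ExpZ.
have tau_neq0 : tau != 0 by rewrite gt_eqF.
have := ler_wpM2l (ltW tau_gt0) Exp_suboptimality_le.
have -> : tau * (eps / tau * B xs) = eps * B xs by field.
have Bs_le := Bfun_le_energy xs fs_flow.
have := ler_wpM2l (ltW eps_gt0) Bs_le; lra.
Qed.

End Convergence.

End DualKOSZ.

End Potentials.

End Graph.

Theorem theorem1 (R : realType) (n m : nat) (src dst : 'I_m -> 'I_n)
    (r : 'I_m -> R) (b : 'I_n -> R) (T : {set 'I_m}) (root : 'I_n)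
    (eps : R) (K : nat) (xstar : 'I_n -> R) (fstar : 'I_m -> R)
    (fK : {ffun 'I_K -> 'I_m} -> 'I_m -> R) :
  (forall e, 0 < r e) ->
  (forall e, src e != dst e) ->
  graph_connected src dst ->
  \sum_i b i = 0 ->
  spanning_tree src dst T ->
  0 < eps ->
  tau src dst r T root * ln (tau src dst r T root / eps) <= K%:R ->
  (forall x, Bfun src dst r b x <= Bfun src dst r b xstar) ->
  is_bflow src dst b fstar ->
  (forall f, is_bflow src dst b f -> energy r fstar <= energy r f) ->
  (forall s : {ffun 'I_K -> 'I_m}, tree_defined_flow src dst r b T (kosz_x src dst r b T root s) (fK s)) ->
  Exp src dst r T root
      (fun s : {ffun 'I_K -> 'I_m} => Lnorm2 src dst r (fun v => xstar v - kosz_x src dst r b T root s v))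
    <= eps / tau src dst r T root * Lnorm2 src dst r xstar
  /\
  Exp src dst r T root (fun s : {ffun 'I_K -> 'I_m} => energy r (fK s))
    <= (1 + eps) * energy r fstar.
Proof.
move=> r_gt0 loopfree _ _ tree eps_gt0 K_ge xs_max fs_flow _ fK_tree.
have [T0 | /set0Pn [e0 e0T]] := eqVneq T set0; last first.
  have one_le_tau := tau_ge1 r_gt0 root tree e0T.
  split; [exact: Exp_potential_error_le | exact: Exp_tree_flow_energy_le].
have no_edge (e : 'I_m) : False.
  by move: (spanning_tree_neq0 tree (loopfree e)); rewrite T0 eqxx.
have Lnorm2_0 x : Lnorm2 src dst r x = 0.
  by rewrite /Lnorm2 quadL_lapform /lapform big1 // => e; case: (no_edge e).
have energy0 f : energy r f = 0 by rewrite /energy big1 ?mulr0 // => e; case: (no_edge e).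
split; rewrite ?Lnorm2_0 ?energy0 mulr0 /Exp big1 ?lexx // => s _.
  by rewrite Lnorm2_0 mulr0.
by rewrite energy0 mulr0.
Qed.
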